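(* Let $A=kQ/I$ be a nondegenerate dimer algebra on a torus with center $Z$, and let $\psi:A\to A'$ be a cyclic contraction. Then for each $i\in Q_0$, $\bar\tau\psi(Ze_i)\subseteq R$.
   Context: Let $k$ be an algebraically closed field. A dimer quiver is a finite quiver $Q$ (vertices $Q_0$, arrows $Q_1$, head/tail $\operatorname{h},\operatorname{t}$) whose underlying graph embeds in a real two-torus so that each connected component of the complement is simply connected and bounded by an oriented cycle (a unit cycle). The dimer algebra is $A=kQ/I$, $I$ generated by all $p-q$ with $p,q$ paths such that for some arrow $a$ both $pa$ and $qa$ are unit cycles. Perfect matching: $D\subseteq Q_1$ meeting each unit cycle in exactly one arrow; nondegenerate: every arrow in some perfect matching. Simple matching: perfect matching $D$ such that the subquiver with arrows $Q_1\setminus D$ contains a cycle through every vertex. Cancellative: no paths $p\neq q$ of $A$ and path $r$ with $rp=rq\neq0$ or $pr=qr\neq0$. For a dimer algebra $A'=kQ'/I'$ with simple matchings $\mathcal{S}'$, $\tau:A'\to M_{|Q'_0|}(k[x_D:D\in\mathcal{S}'])$ is the algebra map with $\tau(e_i)=E_{ii}$, $\tau(a)=\big(\prod_{D\in\mathcal{S}',a\in D}x_D\big)E_{\operatorname{h}(a),\operatorname{t}(a)}$; $\bar\tau(p)$ is given by $\tau(p)=\bar\tau(p)E_{ji}$ for $p\in e_jA'e_i$, extended $k$-linearly. A contraction $\psi:A\to A'$: $A'=kQ'/I'$ is a dimer algebra with $Q'$ obtained from $Q$ by contracting a set of arrows $Q_1^*\subseteq Q_1$ to vertices, the induced map $kQ\to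 kQ'$ sending $I$ into $I'$ and inducing $\psi$. It is cyclic if $A'$ is cancellative and $k[\cup_{i\in Q_0}\bar\tau\psi(e_iAe_i)]=k[\cup_{i\in Q'_0}\bar\tau(e_iA'e_i)]$. $R:=k[\cap_{i\in Q_0}\bar\tau\psi(e_iAe_i)]$ (isomorphic to the center of the homotopy algebra of $A$). *)

From HB Require Import structures.
From mathcomp Require Import all_boot all_order all_algebra all_fingroup.
From mathcomp Require Import mpoly.
From Stdlib Require Import ClassicalDescription.

Set Implicit Arguments.
Unset Strict Implicit.
Unset Printing Implicit Defensive.

Import GRing.Theory.
Local Open Scope ring_scope.

(* A quiver (finite vertex type, finite arrow type, head/tail) embedded in  *)
(* a two-torus with every complementary region an open disc bounded by an  *)
(* oriented cycle (a unit cycle) is encoded by the standard combinatorial   *)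
(* (ribbon-graph) data: every arrow lies on the boundary of exactly one     *)
(* positively oriented unit cycle and one negatively oriented unit cycle;   *)
(* [pos a] ([neg a]) is the arrow following [a] along that boundary.  The   *)
(* unit cycles are the orbits of [pos] and [neg].  The CW-complex obtained  *)
(* by gluing the unit-cycle discs is a closed surface iff the link of every *)
(* vertex is connected, it is connected iff the quiver is connected, it is  *)
(* orientable by construction, and it is a torus iff its Euler             *)
(* characteristic V - E + F vanishes.                                       *)

(* the vertex at which an arrow-end sits: (a,true) = head end, (a,false) = tail end *)
Definition end_vertex (V E : Type) (hd tl : E -> V) (x : E * bool) : V :=
  if x.2 then hd x.1 else tl x.1.

(* two arrow-ends at a vertex are adjacent when they form a corner of a unit cycle *)
Definition corner_rel (E : finType) (sp sm : E -> E) : rel (E * bool) :=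
  fun x y =>
    match x, y with
    | (a, true), (b, false) => (b == sp a) || (b == sm a)
    | (b, false), (a, true) => (b == sp a) || (b == sm a)
    | _, _ => false
    end.

Definition und_adj (V E : finType) (hd tl : E -> V) (S : {set E}) : rel V :=
  fun u v => [exists a in S, ((tl a == u) && (hd a == v)) || ((hd a == u) && (tl a == v))].

Record dimer_quiver := DimerQuiver {
  dq_vert : finType;
  dq_arr : finType;
  dq_hd : dq_arr -> dq_vert;
  dq_tl : dq_arr -> dq_vert;
  dq_pos : {perm dq_arr};
  dq_neg : {perm dq_arr};
  dq_pos_comp : forall a, dq_tl (dq_pos a) = dq_hd a;
  dq_neg_comp : forall a, dq_tl (dq_neg a) = dq_hd a;
  dq_nonempty : (0 < #|dq_vert|)%N;
  dq_link : forall x y : dq_arr * bool,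
      end_vertex dq_hd dq_tl x = end_vertex dq_hd dq_tl y ->
      connect (corner_rel dq_pos dq_neg) x y;
  dq_connected : forall u v : dq_vert, connect (und_adj dq_hd dq_tl setT) u v;
  dq_torus : (#|dq_vert| + #|porbits dq_pos| + #|porbits dq_neg| = #|dq_arr|)%N
}.

Arguments dq_hd {d}.
Arguments dq_tl {d}.

Section Paths.
Variable Q : dimer_quiver.

(* A path is (tail vertex, arrows in order of traversal); the trivial path
   at i is (i, [::]) = e_i. *)
Definition qpath := (dq_vert Q * seq (dq_arr Q))%type.

Definition ptail (p : qpath) : dq_vert Q := p.1.
Definition phead (p : qpath) : dq_vert Q := last p.1 (map dq_hd p.2).
Definition valid_path (p : qpath) : bool :=
  map dq_tl p.2 == belast p.1 (map dq_hd p.2).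
Definition vertices_on (p : qpath) : seq (dq_vert Q) := p.1 :: map dq_hd p.2.

(* composition, right-to-left: [pcomp p q] is "p q" = first q, then p *)
Definition pcomp (p q : qpath) : qpath := (q.1, q.2 ++ p.2).

Definition epath (i : dq_vert Q) : qpath := (i, [::]).

(* the path p such that p a is the positive (resp. negative) unit cycle
   containing a (starting with a) *)
Definition upos (a : dq_arr Q) : qpath :=
  (dq_hd a, behead (traject (dq_pos Q) a #|porbit (dq_pos Q) a|)).
Definition uneg (a : dq_arr Q) : qpath :=
  (dq_hd a, behead (traject (dq_neg Q) a #|porbit (dq_neg Q) a|)).

End Paths.

(* The path algebra kQ (finite formal k-linear combinations of paths),      *)
(* the ideal I, and the dimer algebra A = kQ/I (elements represented in kQ) *)
Section PathAlgebra.
Variable k : fieldType.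
Variable Q : dimer_quiver.

Definition kQ := seq (k * qpath Q).

Definition kQ_valid (x : kQ) : bool := all (fun u => valid_path u.2) x.

Definition coef (x : kQ) (p : qpath Q) : k := \sum_(u <- x | u.2 == p) u.1.

Definition kpath (p : qpath Q) : kQ := [:: (1, p)].

Definition ksub (x y : kQ) : kQ := x ++ [seq (- u.1, u.2) | u <- y].

Definition kmul (x y : kQ) : kQ :=
  flatten [seq [seq (u.1 * v.1, pcomp u.2 v.2) | v <- y & phead v.2 == ptail u.2]
          | u <- x].

Definition dimer_rel (a : dq_arr Q) : kQ := ksub (kpath (upos a)) (kpath (uneg a)).

Definition gen_term (g : k * qpath Q * dq_arr Q * qpath Q) : kQ :=
  kmul (kmul [:: (g.1.1.1, g.1.1.2)] (dimer_rel g.1.2)) (kpath g.2).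

Definition in_I (x : kQ) : Prop :=
  exists gs : seq (k * qpath Q * dq_arr Q * qpath Q),
    all (fun g => valid_path g.1.1.2 && valid_path g.2) gs /\
    forall p, coef x p = coef (flatten (map gen_term gs)) p.

Definition eqA (x y : kQ) : Prop := in_I (ksub x y).

Definition central (x : kQ) : Prop :=
  kQ_valid x /\ forall y, kQ_valid y -> eqA (kmul x y) (kmul y x).

Definition cancellative : Prop :=
  forall p q r : qpath Q, valid_path p -> valid_path q -> valid_path r ->
    ((eqA (kmul (kpath r) (kpath p)) (kmul (kpath r) (kpath q)) /\
      ~ in_I (kmul (kpath r) (kpath p))) -> eqA (kpath p) (kpath q)) /\
    ((eqA (kmul (kpath p) (kpath r)) (kmul (kpath q) (kpath r)) /\
      ~ in_I (kmul (kpath p) (kpath r))) -> eqA (kpath p) (kpath q)).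

End PathAlgebra.

Section Matchings.
Variable Q : dimer_quiver.

Definition perfect_matching (D : {set dq_arr Q}) : bool :=
  [forall O in porbits (dq_pos Q), #|O :&: D| == 1%N] &&
  [forall O in porbits (dq_neg Q), #|O :&: D| == 1%N].

Definition nondegenerate_dimer : Prop :=
  forall a : dq_arr Q, exists D, perfect_matching D && (a \in D).

Definition simple_matching (D : {set dq_arr Q}) : Prop :=
  perfect_matching D /\
  exists c : qpath Q,
    [/\ valid_path c, c.2 != [::], phead c = ptail c,
        all (fun a => a \notin D) c.2 &
        forall v, v \in vertices_on c].

Definition simpleb (D : {set dq_arr Q}) : bool :=
  if excluded_middle_informative (simple_matching D) then true else false.

Definition smatch := {D : {set dq_arr Q} | simpleb D}.

End Matchings.

Section Tau.
Variable k : fieldType.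
Variable Q : dimer_quiver.

Definition nsm := #|{: smatch Q}|.
Definition polyS := {mpoly k[nsm]}.

(* tau(a) = (prod_{D in S, a in D} x_D) E_{h(a),t(a)} *)
Definition tau_arrow (a : dq_arr Q) : polyS :=
  \prod_(D : smatch Q) (if a \in val D then 'X_(enum_rank D) else 1).

(* tau(p) = taubar(p) E_{h(p),t(p)} for a path p *)
Definition taubar_path (p : qpath Q) : polyS := \prod_(a <- p.2) tau_arrow a.

Definition taubar (x : kQ k Q) : polyS := \sum_(u <- x) u.1 *: taubar_path u.2.

End Tau.

Definition in_gen_alg (k : fieldType) (n : nat) (S : {mpoly k[n]} -> Prop)
    (f : {mpoly k[n]}) : Prop :=
  exists l : seq (k * seq {mpoly k[n]}),
    (forall u, u \in l -> forall g, g \in u.2 -> S g) /\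
    f = \sum_(u <- l) u.1 *: \prod_(g <- u.2) g.

(* Q' is obtained from Q by contracting the arrows of ct_arrs to vertices:  *)
(* vertices of Q' = vertices of Q modulo connectivity through contracted    *)
(* arrows (via ct_v), arrows of Q' = remaining arrows (via ct_a).           *)
Record contraction (Q Q' : dimer_quiver) := Contraction {
  ct_arrs : {set dq_arr Q};
  ct_v : dq_vert Q -> dq_vert Q';
  ct_a : dq_arr Q -> dq_arr Q';
  ct_v_surj : forall v' : dq_vert Q', exists v, ct_v v = v';
  ct_v_ker : forall u v, ct_v u = ct_v v <-> connect (und_adj dq_hd dq_tl ct_arrs) u v;
  ct_a_inj : {in ~: ct_arrs &, injective ct_a};
  ct_a_surj : forall a' : dq_arr Q', exists2 a, a \notin ct_arrs & ct_a a = a';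
  ct_hd : forall a, a \notin ct_arrs -> dq_hd (ct_a a) = ct_v (dq_hd a);
  ct_tl : forall a, a \notin ct_arrs -> dq_tl (ct_a a) = ct_v (dq_tl a)
}.

Section Contraction.
Variable k : fieldType.
Variables Q Q' : dimer_quiver.
Variable psi : contraction Q Q'.

Definition psi_path (p : qpath Q) : qpath Q' :=
  (ct_v psi p.1, [seq ct_a psi a | a <- p.2 & a \notin ct_arrs psi]).
Definition psi_kQ (x : kQ k Q) : kQ k Q' := [seq (u.1, psi_path u.2) | u <- x].

(* the induced map sends I into I' (so that it induces psi : A -> A') *)
Definition contraction_ideal : Prop :=
  forall x : kQ k Q, kQ_valid x -> in_I x -> in_I (psi_kQ x).

Definition taubarpsi (x : kQ k Q) : polyS k Q' := taubar (psi_kQ x).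

Definition at_vertex (G : dimer_quiver) (i : dq_vert G) (x : kQ k G) : bool :=
  all (fun u => valid_path u.2 && (ptail u.2 == i) && (phead u.2 == i)) x.

Definition img_psi (i : dq_vert Q) (f : polyS k Q') : Prop :=
  exists x, at_vertex i x /\ f = taubarpsi x.

Definition img' (i : dq_vert Q') (f : polyS k Q') : Prop :=
  exists x : kQ k Q', at_vertex i x /\ f = taubar x.

Definition cyclic_contraction : Prop :=
  cancellative k Q' /\
  forall f, in_gen_alg (fun g => exists i, img_psi i g) f <->
            in_gen_alg (fun g => exists i, img' i g) f.

Definition R_alg (f : polyS k Q') : Prop :=
  in_gen_alg (fun g => forall i, img_psi i g) f.

End Contraction.

From Pilot Require Import Defs.
From HB Require Import structures.
From mathcomp Require Import all_boot all_order all_algebra all_fingroup.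
From mathcomp Require Import mpoly.
From Stdlib Require Import ClassicalDescription.

(* The path weight [taubar_path] is multiplicative and takes the same value on
   the two unit cycles through an arrow [a] with [a] removed, because each
   unit cycle meets every simple (hence perfect) matching exactly once.  So
   taubar kills the dimer ideal, and, as psi maps I into I', so does
   taubar psi; since the generators of I are homogeneous this holds block by
   block, i.e. for e_h x e_t.  Commuting a central z with an arrow a then
   gives taubarpsi(a) taubarpsi(e_h z e_h) = taubarpsi(e_t z e_t) taubarpsi(a)
   for h = h(a), t = t(a), and taubarpsi(a) != 0; commuting z with e_i kills
   the off-diagonal blocks of z e_i.  As Q is connected,
   taubarpsi(z e_i) = taubarpsi(e_j z e_j) lies in taubarpsi(e_j A e_j) for
   every vertex j, hence in R. *)

Set Implicit Arguments.
Unset Strict Implicit.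
Unset Printing Implicit Defensive.
Import GRing.Theory.
Local Open Scope ring_scope.

(* [ssrfun] exports a [pcomp] of its own. *)
Local Notation pcomp := Defs.pcomp.

Section PathCalculus.
Variable G : dimer_quiver.
Implicit Types p q : qpath G.

Lemma phead_pcomp p q : phead q = ptail p -> phead (pcomp p q) = phead p.
Proof. by rewrite /phead /= map_cat last_cat => ->. Qed.

Lemma valid_pcomp p q : valid_path p -> valid_path q ->
  phead q = ptail p -> valid_path (pcomp p q).
Proof.
rewrite /valid_path /= => /eqP vp /eqP vq.
by rewrite !map_cat belast_cat vp vq /phead /ptail => ->.
Qed.

Variable k : fieldType.
Implicit Types x y : kQ k G.

Lemma valid_kmul x y : kQ_valid x -> kQ_valid y -> kQ_valid (kmul x y).
Proof.
move=> /allP vx /allP vy; apply/allP => r /flattenP [s /mapP [u ux ->]].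
move=> /mapP [v]; rewrite mem_filter => /andP [/eqP e vy'] -> /=.
exact: valid_pcomp (vx _ ux) (vy _ vy') e.
Qed.

Definition kQ_homog (h t : dq_vert G) x :=
  all (fun u => (phead u.2 == h) && (ptail u.2 == t)) x.

Lemma kQ_homog_kmul h m m' t x y :
  kQ_homog h m x -> kQ_homog m' t y -> kQ_homog h t (kmul x y).
Proof.
move=> /allP hx /allP hy; apply/allP => r /flattenP [s /mapP [u ux ->]].
move=> /mapP [v]; rewrite mem_filter => /andP [/eqP e vy] -> /=.
have /andP [/eqP hu /eqP tu] := hx _ ux; have /andP [_ /eqP tv] := hy _ vy.
by rewrite phead_pcomp // hu -tv !eqxx.
Qed.

Lemma kQ_homog_seq1 (c : k) p : kQ_homog (phead p) (ptail p) [:: (c, p)].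
Proof. by rewrite /kQ_homog /= !eqxx. Qed.

End PathCalculus.

Section LinearExtension.
Variables (k : fieldType) (G : dimer_quiver) (A : comAlgType k).
Implicit Types (w : qpath G -> A) (x y : kQ k G) (p : qpath G).
Implicit Types f g : dq_vert G -> dq_vert G -> bool.

Definition linext w x : A := \sum_(u <- x) u.1 *: w u.2.

(* [linext (restrict_weight f w) x] is the weight of the sum of the blocks
   [e_h x e_t] of [x] with [f h t]. *)
Definition restrict_weight f w p : A :=
  if f (phead p) (ptail p) then w p else 0.

Definition multiplicative w := forall p q, w (pcomp p q) = w q * w p.

Lemma linext_cat w x y : linext w (x ++ y) = linext w x + linext w y.
Proof. exact: big_cat. Qed.

Lemma linext_ksub w x y : linext w (ksub x y) = linext w x - linext w y.
Proof.
rewrite linext_cat /linext big_map -sumrN; congr (_ + _).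
by apply: eq_bigr => u _; rewrite scaleNr.
Qed.

Lemma linext_flatten w xs : linext w (flatten xs) = \sum_(x <- xs) linext w x.
Proof. exact: big_flatten. Qed.

Lemma linext_coefE w x (s : seq (qpath G)) : uniq s -> {subset map snd x <= s} ->
  linext w x = \sum_(p <- s) coef x p *: w p.
Proof.
move=> us; elim: x => [|u x IH] sx.
  by rewrite /linext big_nil big1 // => p _; rewrite /coef big_nil scale0r.
have su : u.2 \in s by apply: sx; rewrite inE eqxx.
rewrite /linext big_cons -/(linext w x) IH => [|p xp]; last first.
  by apply: sx; rewrite inE xp orbT.
rewrite (bigD1_seq u.2) //= [RHS](bigD1_seq u.2) //= /coef !big_cons eqxx.
rewrite scalerDl addrA; congr (_ + _); apply: eq_bigr => p /negbTE pu.
by rewrite big_cons eq_sym pu.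
Qed.

Lemma eq_linext_coef w x y : (forall p, coef x p = coef y p) -> linext w x = linext w y.
Proof.
move=> exy; have us := undup_uniq (map snd (x ++ y)).
rewrite (linext_coefE w us) => [|p xp]; last by rewrite mem_undup map_cat mem_cat xp.
rewrite (linext_coefE w us) => [|p yp]; last by rewrite mem_undup map_cat mem_cat yp orbT.
by apply: eq_bigr => p _; rewrite exy.
Qed.

Lemma linext_kmul w x y : linext w (kmul x y) =
  \sum_(u <- x) \sum_(v <- y)
     (if phead v.2 == ptail u.2 then (u.1 * v.1) *: w (pcomp u.2 v.2) else 0).
Proof.
rewrite /kmul linext_flatten big_map; apply: eq_bigr => u _.
by rewrite /linext big_map big_filter big_mkcond.
Qed.

Lemma linext_restrict_kQ_homog f w h t x : kQ_homog h t x ->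
  linext (restrict_weight f w) x = if f h t then linext w x else 0.
Proof.
elim: x => [|u x IH] /=; first by rewrite /linext !big_nil; case: ifP.
move=> /andP [/andP [/eqP hu /eqP tu] hx].
rewrite /linext !big_cons -!/(linext _ x) IH // /restrict_weight hu tu.
by case: (f h t); rewrite ?scaler0 ?addr0.
Qed.

Lemma linext_restrictE f w x :
  linext (restrict_weight f w) x = linext w [seq u <- x | f (phead u.2) (ptail u.2)].
Proof.
rewrite /linext big_filter [RHS]big_mkcond; apply: eq_bigr => u _.
by rewrite /restrict_weight; case: ifP; rewrite ?scaler0.
Qed.

Lemma eq_linext_restrict f g w x : f =2 g ->
  linext (restrict_weight f w) x = linext (restrict_weight g w) x.
Proof. by move=> efg; apply: eq_bigr => u _; rewrite /restrict_weight efg. Qed.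

Lemma linext_restrict_split g f w x :
  linext (restrict_weight f w) x =
  linext (restrict_weight (fun h t => g h t && f h t) w) x +
  linext (restrict_weight (fun h t => ~~ g h t && f h t) w) x.
Proof.
rewrite /linext -big_split; apply: eq_bigr => u _ /=; rewrite /restrict_weight.
by case: (g _ _); case: (f _ _); rewrite /= ?scaler0 ?addr0 ?add0r.
Qed.

Lemma linext_kmul_eq0r w x y h t : multiplicative w ->
  kQ_homog h t y -> linext w y = 0 -> linext w (kmul x y) = 0.
Proof.
move=> wM hy wy; rewrite linext_kmul big1 // => u _.
transitivity (\sum_(v <- y)
  if h == ptail u.2 then u.1 *: ((v.1 *: w v.2) * w u.2) else 0).
  rewrite big_seq [RHS]big_seq; apply: eq_bigr => v vy.
  have /andP [/eqP -> _] := allP hy v vy.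
  by case: ifP => // _; rewrite wM -scalerA -scalerAl.
case: (h == ptail u.2); last by rewrite big1.
by rewrite -scaler_sumr -mulr_suml -/(linext w y) wy mul0r scaler0.
Qed.

Lemma linext_kmul_eq0l w x y h t : multiplicative w ->
  kQ_homog h t y -> linext w y = 0 -> linext w (kmul y x) = 0.
Proof.
move=> wM hy wy; rewrite linext_kmul exchange_big big1 // => u _ /=.
transitivity (\sum_(v <- y)
  if phead u.2 == t then u.1 *: (w u.2 * (v.1 *: w v.2)) else 0).
  rewrite big_seq [RHS]big_seq; apply: eq_bigr => v vy.
  have /andP [_ /eqP ->] := allP hy v vy.
  by case: ifP => // _; rewrite wM mulrC -scalerA scalerAr.
case: (phead u.2 == t); last by rewrite big1.
by rewrite -scaler_sumr -mulr_sumr -/(linext w y) wy mulr0 scaler0.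
Qed.

Lemma linext_restrict_kmul_kpathr f w x p : multiplicative w ->
  linext (restrict_weight f w) (kmul x (kpath k p)) =
  linext (restrict_weight (fun h t => (t == phead p) && f h (ptail p)) w) x * w p.
Proof.
move=> wM; rewrite linext_kmul /linext mulr_suml; apply: eq_bigr => u _.
rewrite big_seq1 /= /restrict_weight mulr1 [phead p == _]eq_sym.
case: eqP => [e|_] /=; last by rewrite scaler0 mul0r.
rewrite phead_pcomp; last exact: esym.
by case: (f _ _); rewrite ?scaler0 ?mul0r // wM mulrC scalerAl.
Qed.

Lemma linext_restrict_kmul_kpathl f w x p : multiplicative w ->
  linext (restrict_weight f w) (kmul (kpath k p) x) =
  w p * linext (restrict_weight (fun h t => (h == ptail p) && f (phead p) t) w) x.
Proof.
move=> wM; rewrite linext_kmul big_seq1 /linext mulr_sumr; apply: eq_bigr => v _ /=.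
rewrite /restrict_weight mul1r.
case: eqP => [e|_] /=; last by rewrite scaler0 mulr0.
rewrite phead_pcomp // /ptail.
by case: (f _ _); rewrite ?scaler0 ?mulr0 // wM scalerAl mulrC.
Qed.

End LinearExtension.

Lemma mpolyX_neq0 (R : nzRingType) n (i : 'I_n) : ('X_i : {mpoly R[n]}) != 0.
Proof.
apply/eqP => X0; have := @mcoeffXU n R i i.
by rewrite X0 mcoeff0 eqxx => /eqP; rewrite eq_sym oner_eq0.
Qed.

Lemma simple_matching_perfect (G : dimer_quiver) (D : smatch G) :
  perfect_matching (val D).
Proof.
by have := valP D; rewrite /simpleb; case: excluded_middle_informative => // [[]].
Qed.

Section UnitCycles.
Variables (G : dimer_quiver) (s : {perm dq_arr G}).
Hypothesis s_tl : forall a, dq_tl (s a) = dq_hd a.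

Definition unit_cycle (a : dq_arr G) : qpath G :=
  (dq_hd a, behead (traject s a #|porbit s a|)).

Lemma map_tl_traject m b :
  map dq_tl (traject s (s b) m) = belast (dq_hd b) (map dq_hd (traject s (s b) m)).
Proof. by elim: m b => [|m IH] b //=; rewrite s_tl IH. Qed.

Lemma last_hd_traject m b :
  last (dq_hd b) (map dq_hd (traject s (s b) m)) = dq_tl (iter m.+1 s b).
Proof.
elim: m b => [|m IH] b /=; first by rewrite s_tl.
by rewrite IH -iterSr.
Qed.

Lemma valid_unit_cycle a : valid_path (unit_cycle a).
Proof.
rewrite /unit_cycle /valid_path /=; have := card_porbit_neq0 s a.
by case: #|porbit s a| => [|m] //= _; rewrite map_tl_traject.
Qed.

Lemma phead_unit_cycle a : phead (unit_cycle a) = dq_tl a.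
Proof.
rewrite /unit_cycle /phead /=; have := card_porbit_neq0 s a; have := iter_porbit s a.
by case: #|porbit s a| => [|m] //= sma _; rewrite last_hd_traject -[in RHS]sma.
Qed.

Variable k : fieldType.

Lemma tau_arrow_unit_cycle a :
  (forall D : smatch G, [forall O in porbits s, #|O :&: val D| == 1%N]) ->
  tau_arrow k a * taubar_path k (unit_cycle a) = \prod_(D : smatch G) 'X_(enum_rank D).
Proof.
move=> perf; have -> : tau_arrow k a * taubar_path k (unit_cycle a) =
    \prod_(b <- traject s a #|porbit s a|) tau_arrow k b.
  rewrite /taubar_path /unit_cycle /=; have := card_porbit_neq0 s a.
  by case: #|porbit s a| => [|m] //= _; rewrite big_cons.
rewrite big_uniq ?uniq_traject_porbit //.
rewrite (eq_bigl (mem (porbit s a))) => [|b]; last by rewrite -porbit_traject.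
rewrite /tau_arrow exchange_big /=; apply: eq_bigr => D _.
rewrite -big_mkcondr /= (eq_bigl (mem (porbit s a :&: val D))) => [|b]; last first.
  by rewrite !inE.
have /forall_inP perfD := perf D.
by rewrite prodr_const (eqP (perfD _ _)) ?expr1 // imset_f.
Qed.

End UnitCycles.

Section Taubar.
Variables (k : fieldType) (G : dimer_quiver).
Implicit Types (p : qpath G) (a : dq_arr G) (g : k * qpath G * dq_arr G * qpath G).

Lemma tau_arrow_neq0 a : tau_arrow k a != 0.
Proof. by apply/prodf_neq0 => D _; case: ifP => _; rewrite ?mpolyX_neq0 ?oner_neq0. Qed.

Lemma taubar_path_neq0 p : taubar_path k p != 0.
Proof. by rewrite prodf_seq_neq0; apply/allP => a _; apply: tau_arrow_neq0. Qed.

Lemma taubar_path_multiplicative : multiplicative (@taubar_path k G).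
Proof. by move=> p q; rewrite /taubar_path big_cat. Qed.

Lemma taubar_path_upos_uneg a : taubar_path k (upos a) = taubar_path k (uneg a).
Proof.
apply: (mulfI (tau_arrow_neq0 a)).
rewrite (@tau_arrow_unit_cycle _ (dq_pos G)) => [|D]; last first.
  by have /andP [] := simple_matching_perfect D.
rewrite (@tau_arrow_unit_cycle _ (dq_neg G)) // => D.
by have /andP [] := simple_matching_perfect D.
Qed.

Lemma kQ_homog_dimer_rel a : kQ_homog (dq_tl a) (dq_hd a) (dimer_rel k a).
Proof.
rewrite /kQ_homog /= (phead_unit_cycle (@dq_pos_comp G)).
by rewrite (phead_unit_cycle (@dq_neg_comp G)) !eqxx.
Qed.

Lemma kQ_homog_gen_term g : kQ_homog (phead g.1.1.2) (ptail g.2) (gen_term g).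
Proof.
apply: kQ_homog_kmul (kQ_homog_seq1 1 _).
exact: kQ_homog_kmul (kQ_homog_seq1 _ _) (kQ_homog_dimer_rel _).
Qed.

Lemma valid_gen_term g : valid_path g.1.1.2 -> valid_path g.2 -> kQ_valid (gen_term g).
Proof.
move=> vp vq; apply: valid_kmul; last by rewrite /kQ_valid /= vq.
apply: valid_kmul; first by rewrite /kQ_valid /= vp.
rewrite /kQ_valid /= (valid_unit_cycle (@dq_pos_comp G)).
by rewrite (valid_unit_cycle (@dq_neg_comp G)).
Qed.

Lemma gen_term_in_I g : valid_path g.1.1.2 -> valid_path g.2 -> in_I (gen_term g).
Proof. by move=> vp vq; exists [:: g]; rewrite /= vp vq cats0. Qed.

Lemma linext_taubar_gen_term g : linext (@taubar_path k G) (gen_term g) = 0.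
Proof.
rewrite /gen_term; have tM := taubar_path_multiplicative.
have rel_homog := kQ_homog_dimer_rel g.1.2.
apply: (linext_kmul_eq0l _ tM (kQ_homog_kmul (kQ_homog_seq1 _ _) rel_homog)).
apply: (linext_kmul_eq0r _ tM rel_homog).
by rewrite linext_ksub /linext !big_seq1 !scale1r taubar_path_upos_uneg subrr.
Qed.

Lemma taubarE (x : kQ k G) : taubar x = linext (@taubar_path k G) x.
Proof. by []. Qed.

Lemma taubar_in_I (y : kQ k G) : in_I y -> taubar y = 0.
Proof.
case=> gs [_ coef_y]; rewrite taubarE (eq_linext_coef _ coef_y).
by rewrite linext_flatten big_map big1 // => g _; apply: linext_taubar_gen_term.
Qed.

End Taubar.

Section ContractedWeights.
Variables (k : fieldType) (Q Q' : dimer_quiver) (psi : contraction Q Q').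
Implicit Types (p : qpath Q) (x : kQ k Q).

Definition taubarpsi_path p : polyS k Q' := taubar_path k (psi_path psi p).

Lemma taubarpsi_path_multiplicative : multiplicative taubarpsi_path.
Proof.
by move=> p q; rewrite /taubarpsi_path /taubar_path /psi_path filter_cat map_cat big_cat.
Qed.

Lemma taubarpsi_path_neq0 p : taubarpsi_path p != 0.
Proof. exact: taubar_path_neq0. Qed.

Lemma taubarpsi_path_epath i : taubarpsi_path (epath i) = 1.
Proof. exact: big_nil. Qed.

Lemma taubarpsiE x : taubarpsi psi x = linext taubarpsi_path x.
Proof. by rewrite /taubarpsi taubarE /linext big_map. Qed.

Hypothesis psi_I : contraction_ideal k psi.

Lemma linext_restrict_in_I f x : in_I x ->
  linext (restrict_weight f taubarpsi_path) x = 0.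
Proof.
case=> gs [valid_gs coef_x]; rewrite (eq_linext_coef _ coef_x) linext_flatten big_map.
rewrite big_seq big1 // => g /(allP valid_gs) /andP [vp vq].
rewrite (linext_restrict_kQ_homog _ _ (kQ_homog_gen_term g)) -taubarpsiE.
case: ifP => // _; apply/taubar_in_I/psi_I; first exact: valid_gen_term.
exact: gen_term_in_I.
Qed.

Variable z : kQ k Q.
Hypothesis z_central : central z.

Lemma linext_restrict_central f p : valid_path p ->
  linext (restrict_weight f taubarpsi_path) (kmul z (kpath k p)) =
  linext (restrict_weight f taubarpsi_path) (kmul (kpath k p) z).
Proof.
move=> vp; apply/eqP; rewrite -subr_eq0 -linext_ksub; apply/eqP/linext_restrict_in_I.
by apply: z_central.2; rewrite /kQ_valid /= vp.
Qed.

Definition diag_weight j :=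
  linext (restrict_weight (fun h t => (h == j) && (t == j)) taubarpsi_path) z.

Lemma diag_weight_arrow a : diag_weight (dq_hd a) = diag_weight (dq_tl a).
Proof.
pose p : qpath Q := (dq_tl a, [:: a]).
have vp : valid_path p by rewrite /valid_path /= eqxx.
have := linext_restrict_central (fun h t => (h == dq_hd a) && (t == dq_tl a)) vp.
have tM := taubarpsi_path_multiplicative.
rewrite (linext_restrict_kmul_kpathr _ _ _ tM) (linext_restrict_kmul_kpathl _ _ _ tM).
rewrite mulrC.
move=> /(mulfI (taubarpsi_path_neq0 p)) eq_blocks.
apply: etrans (etrans eq_blocks _); apply: eq_linext_restrict => h t /=.
  by rewrite eqxx andbT andbC.
by rewrite eqxx.
Qed.

Lemma diag_weight_const i j : diag_weight i = diag_weight j.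
Proof.
have /connectP [s walk ->] := dq_connected i j.
elim: s i walk => [|v s IH] i //= /andP [/existsP [a /andP [_ ends]] walk].
rewrite -(IH _ walk).
by case/orP: ends => /andP [/eqP <- /eqP <-]; rewrite diag_weight_arrow.
Qed.

Lemma offdiag_weight_eq0 i :
  linext (restrict_weight (fun h t => (h != i) && (t == i)) taubarpsi_path) z = 0.
Proof.
have vi : valid_path (epath i) by [].
have := linext_restrict_central (fun h t => (h != i) && (t == i)) vi.
have tM := taubarpsi_path_multiplicative.
rewrite (linext_restrict_kmul_kpathr _ _ _ tM) (linext_restrict_kmul_kpathl _ _ _ tM).
rewrite taubarpsi_path_epath mulr1 mul1r.
have -> : linext (restrict_weight (fun h t => (h == ptail (epath i)) &&
    ((phead (epath i) != i) && (t == i))) taubarpsi_path) z = 0.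
  by rewrite /linext big1 // => u _; rewrite /restrict_weight /= eqxx andbF scaler0.
move=> <-; apply: eq_linext_restrict => h t /=.
by rewrite eqxx andbT andbC.
Qed.

Lemma taubarpsi_kmul_epath i :
  taubarpsi psi (kmul z (kpath k (epath i))) = diag_weight i.
Proof.
rewrite taubarpsiE.
have -> : linext taubarpsi_path =
  linext (restrict_weight (fun _ _ => true) taubarpsi_path) by [].
rewrite (linext_restrict_kmul_kpathr _ _ _ taubarpsi_path_multiplicative).
rewrite taubarpsi_path_epath mulr1 (linext_restrict_split (fun h _ => h == i)).
rewrite -[RHS]addr0 -(offdiag_weight_eq0 i); congr (_ + _).
  by apply: eq_linext_restrict => h t; rewrite andbT.
by apply: eq_linext_restrict => h t; rewrite andbT.
Qed.

Lemma diag_weight_img j : img_psi psi j (diag_weight j).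
Proof.
exists [seq u <- z | (phead u.2 == j) && (ptail u.2 == j)]; split.
  apply/allP => u; rewrite mem_filter => /andP [/andP [hu tu] uz].
  by rewrite (allP z_central.1 u uz) hu tu.
by rewrite taubarpsiE /diag_weight linext_restrictE.
Qed.

End ContractedWeights.

Theorem lemma3p14 (k : closedFieldType) (Q Q' : dimer_quiver)
    (psi : contraction Q Q') :
  nondegenerate_dimer Q ->
  contraction_ideal k psi ->
  cyclic_contraction k psi ->
  forall z : kQ k Q, central z ->
  forall i : dq_vert Q,
    R_alg psi (taubarpsi psi (kmul z (kpath k (epath i)))).
Proof.
(* Only psi(I) <= I' and the connectedness of Q are used. *)
move=> _ psi_I _ z z_central i.
exists [:: (1, [:: taubarpsi psi (kmul z (kpath k (epath i)))])].
split; last by rewrite !big_seq1 scale1r.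
move=> u; rewrite mem_seq1 => /eqP -> g; rewrite mem_seq1 => /eqP -> j.
rewrite (taubarpsi_kmul_epath psi_I z_central) (diag_weight_const psi_I z_central i j).
exact: diag_weight_img.
Qed.
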